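(* For every positive integer $t$ there exist constants $\alpha,\beta,\gamma>0$ such that the following holds. Let $s$ be a positive integer and $n\geq 2$ an integer, and let $G$ be a quasi-comparability graph of complexity $t$ on $n$ vertices that contains no clique of size $s$. Then $$\chi(G)\leq \alpha s^{\beta}(\log n)^{\gamma}.$$
   Context: For $\mathbf{x},\mathbf{y}\in\mathbb{R}^t$ write $\mathbf{x}\prec\mathbf{y}$ if $\mathbf{x}(i)<\mathbf{y}(i)$ for every $i\in[t]$. A quasi-comparability graph of complexity $t$ is a finite simple graph $G$ with $V(G)\subset\mathbb{R}^t\times\mathbb{R}^t$ in which distinct vertices $(\mathbf{x},\mathbf{y})$ and $(\mathbf{x}',\mathbf{y}')$ are adjacent iff $\mathbf{x}\prec\mathbf{y}'$ or $\mathbf{x}'\prec\mathbf{y}$. $\chi(G)$ is the chromatic number. *)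

From Stdlib Require Import Reals.
From mathcomp Require Import all_boot.
Set Implicit Arguments. Unset Strict Implicit. Unset Printing Implicit Defensive.

Definition vprec (t : nat) (x y : 'I_t -> R) : bool :=
  [forall i, if Rlt_dec (x i) (y i) then true else false].

(* A quasi-comparability graph of complexity t on n vertices: the vertices are
   the points p i (i : 'I_n) of R^t x R^t, p injective (distinct points). *)
Definition qc_adj (t n : nat) (p : 'I_n -> ('I_t -> R) * ('I_t -> R))
  (i j : 'I_n) : bool :=
  (i != j) && (vprec (p i).1 (p j).2 || vprec (p j).1 (p i).2).

Definition is_clique t n (p : 'I_n -> ('I_t -> R) * ('I_t -> R))
  (S : {set 'I_n}) : bool :=
  [forall i in S, forall j in S, (i != j) ==> qc_adj p i j].

Definition clique_free t n (p : 'I_n -> ('I_t -> R) * ('I_t -> R)) (s : nat)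
  : Prop :=
  ~ exists S : {set 'I_n}, #|S| = s /\ is_clique p S.

Definition colorable t n (p : 'I_n -> ('I_t -> R) * ('I_t -> R)) (k : nat)
  : bool :=
  [exists c : {ffun 'I_n -> 'I_k},
     [forall i, forall j, qc_adj p i j ==> (c i != c j)]].

Lemma colorable_n t n (p : 'I_n -> ('I_t -> R) * ('I_t -> R)) :
  exists k, colorable p k.
Proof.
exists n; apply/existsP; exists [ffun i => i].
apply/forallP => i; apply/forallP => j; apply/implyP => /andP [Hij _].
by rewrite !ffunE.
Qed.

Definition chromatic_number t n (p : 'I_n -> ('I_t -> R) * ('I_t -> R))
  : nat := ex_minn (colorable_n p).

From Stdlib Require Import Reals Lra.
From mathcomp Require Import all_boot zify.
Set Implicit Arguments. Unset Strict Implicit. Unset Printing Implicit Defensive.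

(* Replace every coordinate by its rank among all the 2tn coordinates.  For
   a pair of ranks (X, Y) let its dyadic level be the least m such that X and
   Y lie in the same dyadic block of length 2^m.  Call the type of a vertex
   the list, over the t coordinates, of the level of (x(i), y(i)) and of the
   boolean x(i) < y(i).  Among vertices of one type the relation x_u ≺ y_v is
   transitive, so the edges inside a type can be oriented into a strict
   partial order whose chains are cliques; colouring a vertex by its type and
   its height in that order is proper and uses at most
   (2 (floor (log2 (2tn)) + 2))^t s colours. *)

Lemma exists_common_dyadic_block X Y : exists m, X %/ 2 ^ m == Y %/ 2 ^ m.
Proof.
exists (X + Y); have lt_exp := ltn_expl (X + Y) (isT : 1 < 2).
by rewrite !divn_small //; lia.
Qed.

Definition dyadic_level X Y := ex_minn (exists_common_dyadic_block X Y).

Lemma dyadic_levelE X Y :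
  X %/ 2 ^ dyadic_level X Y = Y %/ 2 ^ dyadic_level X Y.
Proof. by rewrite /dyadic_level; case: ex_minnP => m /eqP. Qed.

Lemma dyadic_level_min X Y m : X %/ 2 ^ m = Y %/ 2 ^ m -> dyadic_level X Y <= m.
Proof. by rewrite /dyadic_level; case: ex_minnP => m0 _ min_m0 /eqP/min_m0. Qed.

Lemma dyadic_level_ltn X Y m : X < 2 ^ m -> Y < 2 ^ m -> dyadic_level X Y <= m.
Proof. by move=> ltX ltY; apply: dyadic_level_min; rewrite !divn_small. Qed.

Lemma dyadic_levelS X Y m : dyadic_level X Y = m.+1 ->
  X %/ 2 ^ m %/ 2 = Y %/ 2 ^ m %/ 2 /\ X %/ 2 ^ m != Y %/ 2 ^ m.
Proof.
move=> lvl; have := dyadic_levelE X Y; rewrite lvl expnSr !divnMA => ->.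
by split=> //; apply/eqP => /dyadic_level_min; rewrite lvl ltnn.
Qed.

Lemma ltn_of_ltn_div X Y d : X %/ d < Y %/ d -> X < Y.
Proof. by apply: contraTT; rewrite -!leqNgt => /leq_div2r. Qed.

(* At a level m > 0, X and Y lie in the two halves of one block of length
   2^m, X in the lower half iff X < Y. *)
Lemma ltn_dyadic_level X1 Y1 X2 Y2 m :
    dyadic_level X1 Y1 = m -> dyadic_level X2 Y2 = m -> (X1 < Y1) = (X2 < Y2) ->
  (X1 < Y2) =
  (X1 %/ 2 ^ m < X2 %/ 2 ^ m) || (X1 %/ 2 ^ m == X2 %/ 2 ^ m) && (X1 < Y1).
Proof.
case: m => [|m] lvl1 lvl2 same_dir.
  have := dyadic_levelE X1 Y1; have := dyadic_levelE X2 Y2.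
  by rewrite lvl1 lvl2 expn0 !divn1 => -> ->; rewrite ltnn andbF orbF.
have [half1 ne1] := dyadic_levelS lvl1; have [half2 ne2] := dyadic_levelS lvl2.
rewrite expnSr !divnMA.
have [dir12 dir21] : (X1 < Y1 -> X2 < Y2) /\ (X2 < Y2 -> X1 < Y1).
  by rewrite same_dir.
have ltn_div a b : a %/ 2 ^ m < b %/ 2 ^ m -> a < b := @ltn_of_ltn_div a b _.
have := ltn_div X1 Y1; have := ltn_div Y1 X1; have := ltn_div X2 Y2.
have := ltn_div Y2 X2; have := ltn_div X1 Y2; have := ltn_div Y2 X1.
move: (X1 %/ 2 ^ m) (Y1 %/ 2 ^ m) (X2 %/ 2 ^ m) (Y2 %/ 2 ^ m) half1 ne1 half2 ne2.
move=> a1 b1 a2 b2 half1 /eqP ne1 half2 /eqP ne2 *.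
apply/idP/idP; lia.
Qed.

Lemma ltn_dyadic_level_trans X1 Y1 X2 Y2 X3 Y3 :
    dyadic_level X1 Y1 = dyadic_level X2 Y2 ->
    dyadic_level X2 Y2 = dyadic_level X3 Y3 ->
    (X1 < Y1) = (X2 < Y2) -> (X2 < Y2) = (X3 < Y3) ->
  X1 < Y2 -> X2 < Y3 -> X1 < Y3.
Proof.
move=> lvl12 lvl23 dir12 dir23.
rewrite (ltn_dyadic_level erefl (esym lvl12) dir12).
rewrite (ltn_dyadic_level erefl (esym lvl23) dir23).
rewrite (ltn_dyadic_level erefl (esym (etrans lvl12 lvl23)) (etrans dir12 dir23)).
rewrite -lvl12 -dir12; lia.
Qed.

Lemma exists_subset_card (T : finType) (A : {set T}) k :
  k <= #|A| -> exists2 B : {set T}, B \subset A & #|B| = k.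
Proof.
move=> leqkA; exists [set x in take k (enum A)].
  by apply/subsetP => x; rewrite inE => /mem_take; rewrite mem_enum.
by rewrite cardsE (card_uniqP (take_uniq _ (enum_uniq _))) size_takel -?cardE.
Qed.

Section Height.
Variables (T : finType) (r : rel T).
Hypotheses (r_irr : irreflexive r) (r_trans : transitive r).

Definition chainb (S : {set T}) :=
  [forall a in S, forall b in S, (a != b) ==> r a b || r b a].

Definition height v :=
  \max_(S : {set T} | [forall w in S, r w v] && chainb S) #|S|.

Lemma height_witness v :
  exists2 S : {set T}, [forall w in S, r w v] && chainb S & #|S| = height v.
Proof.
have below0 : [forall w in set0, r w v] && chainb set0.
  by apply/andP; split; apply/forall_inP => w; rewrite inE.
rewrite /height (bigmax_eq_arg set0 below0).
by case: arg_maxnP => // S belowS _; exists S.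
Qed.

Lemma height_lt u v : r u v -> height u < height v.
Proof.
move=> ruv; have [S /andP[/forall_inP belowS /forall_inP chainS] <-] :=
  height_witness u.
have uS : u \notin S by apply: contraFN (r_irr u) => /belowS.
suff: #|u |: S| <= height v by rewrite cardsU1 uS.
apply: leq_bigmax_cond; apply/andP; split.
  by apply/forall_inP => w /setU1P[-> // | /belowS rwu]; apply: r_trans ruv.
apply/forall_inP => a /setU1P[-> | aS]; apply/forall_inP => b /setU1P[-> | bS].
- by rewrite eqxx.
- by rewrite (belowS b bS) orbT implybT.
- by rewrite (belowS a aS) implybT.
- exact: (forall_inP (chainS a aS) b bS).
Qed.

End Height.


Definition Rltb (a b : R) : bool := if Rlt_dec a b then true else false.

Lemma RltbP (a b : R) : reflect (Rlt a b) (Rltb a b).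
Proof. by rewrite /Rltb; case: Rlt_dec => ?; constructor. Qed.

Section Rank.
Variables (I : finType) (f : I -> R).

Definition rank (z : R) : nat := #|[set w | Rltb (f w) z]|.

Lemma rank_le_card (z : R) : rank z <= #|I|.
Proof. exact: max_card. Qed.

Lemma rank_subset (z z' : R) :
  Rle z' z -> [set w | Rltb (f w) z'] \subset [set w | Rltb (f w) z].
Proof.
by move=> le_z'z; apply/subsetP => w; rewrite !inE => /RltbP ?; apply/RltbP; lra.
Qed.

Lemma ltn_rank w (z : R) : (rank (f w) < rank z) = Rltb (f w) z.
Proof.
apply/idP/RltbP => [lt_rank | lt_wz].
  case: (Rlt_or_le (f w) z) => // /rank_subset/subset_leq_card.
  by rewrite leqNgt lt_rank.
apply/proper_card/properP; split; first exact/rank_subset/Rlt_le.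
by exists w; rewrite !inE; apply/RltbP; lra.
Qed.

End Rank.

Lemma vprecP t (x y : 'I_t -> R) :
  reflect (forall i, Rlt (x i) (y i)) (vprec x y).
Proof. by apply: (iffP forallP) => lt_xy i; apply/RltbP; apply: lt_xy. Qed.

Lemma qc_adjC t n (p : 'I_n -> ('I_t -> R) * ('I_t -> R)) u v :
  qc_adj p u v = qc_adj p v u.
Proof. by rewrite /qc_adj eq_sym orbC. Qed.

Lemma clique_card_lt t n (p : 'I_n -> ('I_t -> R) * ('I_t -> R)) s S :
  clique_free p s -> is_clique p S -> #|S| < s.
Proof.
move=> cfree cliqueS; rewrite ltnNge; apply/negP => /exists_subset_card[B BS cardB].
apply: cfree; exists B; split => //.
apply/forall_inP => a /(subsetP BS) aS; apply/forall_inP => b /(subsetP BS) bS.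
exact: (forall_inP (forall_inP cliqueS a aS) b bS).
Qed.

Lemma chromatic_number_le_card t n (p : 'I_n -> ('I_t -> R) * ('I_t -> R))
    (C : finType) (c : 'I_n -> C) :
  (forall u v, qc_adj p u v -> c u != c v) -> chromatic_number p <= #|C|.
Proof.
move=> proper_c; rewrite /chromatic_number; case: ex_minnP => k _ -> //.
apply/existsP; exists [ffun u => enum_rank (c u)].
apply/forallP => u; apply/forallP => v; apply/implyP => /proper_c.
by rewrite !ffunE; apply: contra => /eqP/enum_rank_inj ->.
Qed.

Section QuasiComparabilityGraph.
Variables (t n : nat) (p : 'I_n -> ('I_t -> R) * ('I_t -> R)).

Definition endpoint (w : 'I_n * 'I_t * bool) : R :=
  if w.2 then (p w.1.1).1 w.1.2 else (p w.1.1).2 w.1.2.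

Definition xrank u i := rank endpoint ((p u).1 i).
Definition yrank u i := rank endpoint ((p u).2 i).

Definition xprec u v := vprec (p u).1 (p v).2.

Lemma xprec_rank u v : xprec u v = [forall i, xrank u i < yrank v i].
Proof. by apply: eq_forallb => i; rewrite /xrank (ltn_rank endpoint (u, i, true)). Qed.

Definition nlevels := (trunc_log 2 (n * t * 2)).+2.

Lemma dyadic_level_rank_lt u i : dyadic_level (xrank u i) (yrank u i) < nlevels.
Proof.
have lt_rank z : rank endpoint z < 2 ^ (trunc_log 2 (n * t * 2)).+1.
  apply: leq_ltn_trans (trunc_log_ltn (n * t * 2) (isT : 1 < 2)).
  by apply: leq_trans (rank_le_card _ _) _; rewrite !card_prod !card_ord card_bool.
by rewrite ltnS; apply: dyadic_level_ltn; apply: lt_rank.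
Qed.

Definition dyadic_type u : {ffun 'I_t -> 'I_nlevels * bool} :=
  [ffun i => (Ordinal (dyadic_level_rank_lt u i), xrank u i < yrank u i)].

Lemma xprec_trans_type u v w :
    dyadic_type u = dyadic_type v -> dyadic_type v = dyadic_type w ->
  xprec u v -> xprec v w -> xprec u w.
Proof.
move=> Tuv Tvw; rewrite !xprec_rank => /forallP uv /forallP vw.
apply/forallP => i.
have coord a b : dyadic_type a = dyadic_type b ->
    dyadic_level (xrank a i) (yrank a i) = dyadic_level (xrank b i) (yrank b i)
    /\ (xrank a i < yrank a i) = (xrank b i < yrank b i).
  by move=> /ffunP/(_ i); rewrite !ffunE => -[].
have [luv duv] := coord _ _ Tuv; have [lvw dvw] := coord _ _ Tvw.
exact: ltn_dyadic_level_trans luv lvw duv dvw (uv i) (vw i).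
Qed.

Definition qc_lt u v :=
  [&& dyadic_type u == dyadic_type v, xprec u v & ~~ xprec v u || (u < v)].

Lemma qc_lt_irr : irreflexive qc_lt.
Proof. by move=> u; rewrite /qc_lt ltnn orbF andbN andbF. Qed.

Lemma qc_lt_trans : transitive qc_lt.
Proof.
move=> v u w /and3P[/eqP Tuv uv ord_uv] /and3P[/eqP Tvw vw ord_vw].
have Tuw := etrans Tuv Tvw.
rewrite /qc_lt Tuw eqxx (xprec_trans_type Tuv Tvw uv vw) /=.
case: (boolP (xprec w u)) => //= wu.
have vu := xprec_trans_type Tvw (esym Tuw) vw wu.
have wv := xprec_trans_type (esym Tuw) Tuv wu uv.
by move: ord_uv ord_vw; rewrite vu wv /=; apply: ltn_trans.
Qed.

Lemma qc_lt_adj u v : qc_lt u v -> qc_adj p u v.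
Proof.
move=> lt_uv; apply/andP; split; last by case/and3P: lt_uv => _ uv _; apply/orP; left.
by apply: contraFN (qc_lt_irr u) => /eqP uv_eq; rewrite {2}uv_eq.
Qed.

Lemma qc_adj_lt u v :
  dyadic_type u = dyadic_type v -> qc_adj p u v -> qc_lt u v || qc_lt v u.
Proof.
move=> Tuv /andP[neq_uv adj]; rewrite /qc_lt Tuv eqxx /= /xprec.
case: (ltngtP u v) => [_|_|/val_inj eq_uv]; last by rewrite eq_uv eqxx in neq_uv.
all: by move: adj; case: (vprec (p u).1 (p v).2); case: (vprec (p v).1 (p u).2).
Qed.

Lemma qc_height_lt s v : clique_free p s -> height qc_lt v < s.
Proof.
move=> cfree; have [S /andP[_ chainS] <-] := height_witness qc_lt v.
apply: clique_card_lt cfree _.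
apply/forall_inP => a aS; apply/forall_inP => b bS; apply/implyP => neq_ab.
have /orP[/qc_lt_adj // | /qc_lt_adj] :=
  implyP (forall_inP (forall_inP chainS a aS) b bS) neq_ab.
by rewrite qc_adjC.
Qed.

Lemma chromatic_number_le_levels s :
  clique_free p s -> chromatic_number p <= (nlevels * 2) ^ t * s.
Proof.
move=> cfree.
pose colour u := (dyadic_type u, Ordinal (qc_height_lt u cfree)).
apply: leq_trans (chromatic_number_le_card (c := colour) _) _; last first.
  by rewrite card_prod card_ffun card_prod !card_ord card_bool.
move=> u v adj; apply/negP => /eqP [Tuv h_eq].
have /orP[] := qc_adj_lt Tuv adj => /(height_lt qc_lt_irr qc_lt_trans);
  by rewrite h_eq ltnn.
Qed.

Lemma exp_nlevels_le : 1 < n -> 0 < t -> 2 ^ nlevels <= n ^ (t + 4).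
Proof.
move=> n_gt1 t_gt0.
have log_le : 2 ^ trunc_log 2 (n * t * 2) <= n * t * 2.
  by apply: trunc_logP => //; rewrite !muln_gt0 t_gt0 andbT; lia.
have t_le : t <= n ^ t.
  by apply: leq_trans (ltnW (ltn_expl t (isT : 1 < 2))) _; rewrite leq_exp2r.
have n3_ge : 2 ^ 3 <= n ^ 3 by rewrite leq_exp2r.
rewrite /nlevels !expnS mulnA (addnC t) expnD expnSr.
apply: leq_trans (leq_mul (leqnn (2 * 2)) log_le) _.
by apply: leq_trans (leq_mul (leq_mul n3_ge (leqnn n)) t_le); lia.
Qed.

End QuasiComparabilityGraph.

Local Open Scope R_scope.

Lemma INR_expn (m k : nat) : INR (m ^ k)%N = INR m ^ k.
Proof. by elim: k => [|k IHk] //; rewrite expnS mult_INR IHk. Qed.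

Lemma ln_le (x y : R) : 0 < x -> x <= y -> ln x <= ln y.
Proof.
move=> x_gt0 [lt_xy | ->]; last exact: Rle_refl.
exact/Rlt_le/ln_increasing.
Qed.

Lemma ln_le_of_expn (a b k l : nat) : (0 < a)%N -> (0 < b)%N ->
  (a ^ k <= b ^ l)%N -> INR k * ln (INR a) <= INR l * ln (INR b).
Proof.
move=> a_gt0 b_gt0 le_exp.
have [a_pos b_pos] : 0 < INR a /\ 0 < INR b by split; apply/lt_0_INR/ssrnat.ltP.
rewrite -!ln_pow //; apply: ln_le; first exact: pow_lt.
by rewrite -!INR_expn; apply/le_INR/ssrnat.leP.
Qed.

Theorem theorem3p1 :
  forall t : nat, (0 < t)%N ->
  exists alpha beta gamma : R,
    Rlt 0 alpha /\ Rlt 0 beta /\ Rlt 0 gamma /\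
    forall (s n : nat) (p : 'I_n -> ('I_t -> R) * ('I_t -> R)),
      (0 < s)%N -> (2 <= n)%N -> injective p -> clique_free p s ->
      Rle (INR (chromatic_number p))
          (Rmult (Rmult alpha (Rpower (INR s) beta))
                 (Rpower (ln (INR n)) gamma)).
Proof.
move=> t t_gt0.
have ln2_gt0 : 0 < ln 2 by have := ln_lt_2; lra.
have t4_gt0 : 0 < INR (t + 4) by apply/lt_0_INR/ssrnat.ltP; rewrite addn4.
pose A := 2 * INR (t + 4) / ln 2.
have A_ln2 : A * ln 2 = 2 * INR (t + 4) by rewrite /A; field; lra.
exists (A ^ t), 1, (INR t); split; [apply: pow_lt; nra | split; [lra | split]].
  exact/lt_0_INR/ssrnat.ltP.
move=> s n p s_gt0 n_ge2 _ cfree.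
have n_ge2R : 2 <= INR n by apply/(le_INR 2)/ssrnat.leP.
have lnn_gt0 : 0 < ln (INR n) by have := ln_le Rlt_0_2 n_ge2R; lra.
have levels : INR (nlevels t n * 2) <= A * ln (INR n).
  have := ln_le_of_expn (isT : (0 < 2)%N) (ltnW n_ge2) (exp_nlevels_le n_ge2 t_gt0).
  have INR2 : INR 2 = 2 by rewrite /=; lra.
  by rewrite mult_INR INR2; nra.
rewrite Rpower_1 ?Rpower_pow //; last exact/lt_0_INR/ssrnat.ltP.
apply: Rle_trans (le_INR _ _ (ssrnat.leP (chromatic_number_le_levels cfree))) _.
rewrite mult_INR INR_expn.
have := pow_incr _ _ t (conj (pos_INR _) levels); rewrite Rpow_mult_distr => H.
have := Rmult_le_compat_r (INR s) _ _ (pos_INR s) H; lra.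
Qed.
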